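(* A graph $G$ has exactly one Grundy total dominating set (i.e., is a unique Grundy total domination graph) if and only if $\gamma_{gr}^{t}(G)=n(G)-i(G)$, where $n(G)$ is the number of vertices and $i(G)$ the number of isolated vertices of $G$.
   Context: For a graph $G$, $N(v)$ denotes the open neighborhood of $v$. A sequence $(v_1,\ldots,v_k)$ of distinct vertices is an open neighborhood sequence if $N(v_i)\setminus\bigcup_{j=1}^{i-1}N(v_j)\neq\emptyset$ for each $i\in[k]$. The Grundy total domination number $\gamma_{gr}^{t}(G)$ is the maximum length of an open neighborhood sequence; the vertex set of such a maximum-length sequence is a Grundy total dominating set. *)

(* A simple graph is a symmetric irreflexive relation e on a finType T. *)
From mathcomp Require Import all_boot.
Set Implicit Arguments. Unset Strict Implicit. Unset Printing Implicit Defensive.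

Section GrundyTotal.
Variables (T : finType) (e : rel T).

Definition N (v : T) : {set T} := [set u | e v u].

Definition is_ONS (s : seq T) : bool :=
  uniq s &&
  [forall i : 'I_(size s),
     N (tnth (in_tuple s) i) :\: \bigcup_(v <- take i s) N v != set0].

(* maximum length of an open neighbourhood sequence
   (every ONS is duplicate-free, hence of length <= #|T|) *)
Definition gamma_gr_t : nat :=
  \max_(k < #|T|.+1 | [exists t : k.-tuple T, is_ONS t]) k.

Definition is_GTDS (S : {set T}) : Prop :=
  exists s : seq T, [/\ is_ONS s, size s = gamma_gr_t & S = [set x in s]].

Definition n_isolated : nat := #|[set v | [forall u, ~~ e v u]]|.

End GrundyTotal.

(** Each vertex s_i of an open neighbourhood sequence (s_1, ..., s_k) has a
    footprint f_i: a neighbour of s_i adjacent to no earlier s_j.  By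
    symmetry of adjacency, the reversed footprints (f_k, ..., f_1) again form
    an open neighbourhood sequence, with footprints (s_k, ..., s_1).

    Every open neighbourhood sequence consists of non-isolated vertices, so
    if gamma_gr_t = n - i, the vertex set of every maximum sequence is the
    set of all non-isolated vertices.  Conversely, let s be a maximum
    sequence.  Any vertex z with a neighbour is dominated by s, otherwise s
    could be extended.  Replacing the footprint of the first s_m dominating z
    by z and reversing yields a maximum sequence through z; so if the
    Grundy total dominating set is unique, it contains every dominated
    vertex, hence every non-isolated vertex. *)

From mathcomp Require Import all_boot.
From mathcomp Require Import zify.
Set Implicit Arguments. Unset Strict Implicit. Unset Printing Implicit Defensive.

Section GrundyTotalDomination.
Variables (T : finType) (e : rel T).

Definition footprint (x0 : T) (s f : seq T) : Prop :=
  size f = size s /\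
  forall i, i < size s -> e (nth x0 s i) (nth x0 f i) /\
    forall j, j < i -> ~~ e (nth x0 s j) (nth x0 f i).

Definition max_ONS (s : seq T) : Prop := is_ONS e s /\ size s = gamma_gr_t e.

Definition nonisolated : {set T} := [set v | [exists u, e v u]].

Lemma card_nonisolated : #|nonisolated| = #|T| - n_isolated e.
Proof.
rewrite /n_isolated cardsCs; congr (_ - _).
by apply: eq_card => v; rewrite !inE negb_exists.
Qed.

Lemma mem_bigcup_N (r : seq T) u :
  (u \in \bigcup_(v <- r) N e v) = has (e^~ u) r.
Proof.
elim: r => [|v r IH]; first by rewrite big_nil in_set0.
by rewrite big_cons in_setU IH inE.
Qed.

Lemma footprint_uniq x0 s f : footprint x0 s f -> uniq s.
Proof.
case=> _ fp; apply/(uniqP x0) => i j; rewrite !inE => ltis ltjs sij.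
case: (ltngtP i j) => // lt.
- by have [ej /(_ i lt)] := fp j ltjs; rewrite sij ej.
- by have [ei /(_ j lt)] := fp i ltis; rewrite -sij ei.
Qed.

Lemma ONS_footprintP x0 s : is_ONS e s <-> exists f, footprint x0 s f.
Proof.
split.
- case/andP => _ /forallP ons.
  pose g i := odflt x0 [pick u in N e (nth x0 s i) :\: \bigcup_(v <- take i s) N e v].
  exists (map g (iota 0 (size s))); split; first by rewrite size_map size_iota.
  move=> i lti; rewrite (nth_map 0) ?size_iota // nth_iota // add0n /g.
  have := ons (Ordinal lti); rewrite (tnth_nth x0) /=.
  case: pickP => [u + _ | none]; last by case/set0Pn => u hu; have := none u; rewrite /= hu.
  rewrite in_setD mem_bigcup_N inE => /andP[fresh eu]; split=> // j ltji.
  apply: contra fresh => eju; apply/(has_nthP x0); exists j.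
    by rewrite size_takel // ltnW.
  by rewrite nth_take.
- case=> f fpf; rewrite /is_ONS (footprint_uniq fpf); apply/forallP => i.
  have [esf fresh] := fpf.2 i (ltn_ord i).
  apply/set0Pn; exists (nth x0 f i).
  rewrite in_setD mem_bigcup_N inE (tnth_nth x0) esf andbT.
  apply/(has_nthP x0) => -[j]; rewrite size_takel ?(ltnW (ltn_ord i)) // => ltji.
  by rewrite nth_take // (negbTE (fresh j ltji)).
Qed.

Lemma footprint_rev x0 s f : symmetric e ->
  footprint x0 s f -> footprint x0 (rev f) (rev s).
Proof.
move=> e_sym [szf fp]; split; first by rewrite !size_rev.
move=> i; rewrite size_rev szf => lti.
rewrite !nth_rev ?szf //.
have [esf _] := fp (size s - i.+1) ltac:(lia).
split=> [|j ltji]; first by rewrite e_sym.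
rewrite nth_rev ?szf; last lia.
by rewrite e_sym; apply: (fp (size s - j.+1) ltac:(lia)).2; lia.
Qed.

Lemma footprint_set_nth x0 s f m z : footprint x0 s f -> m < size s ->
  e (nth x0 s m) z -> (forall j, j < m -> ~~ e (nth x0 s j) z) ->
  footprint x0 s (set_nth x0 f m z).
Proof.
case=> szf fp ltm esz fresh; split; first by rewrite size_set_nth szf; apply/maxn_idPr.
by move=> i lti; rewrite nth_set_nth /=; case: eqP => [->|_]; [split | exact: fp].
Qed.

Lemma footprint_rcons x0 s f x z : footprint x0 s f ->
  e x z -> ~~ has (e^~ z) s -> footprint x0 (rcons s x) (rcons f z).
Proof.
case=> szf fp exz fresh; split; first by rewrite !size_rcons szf.
move=> i; rewrite size_rcons ltnS leq_eqVlt => /orP[/eqP->|lti].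
- rewrite !nth_rcons szf ltnn eqxx; split=> // j ltj; rewrite nth_rcons ltj.
  by apply: contra fresh => ejz; apply/(has_nthP x0); exists j.
- rewrite !nth_rcons szf lti; have [esf fr] := fp i lti; split=> // j ltji.
  by rewrite nth_rcons (ltn_trans ltji lti); apply: fr.
Qed.

Lemma ONS_uniq s : is_ONS e s -> uniq s.
Proof. by case/andP. Qed.

Lemma ONS_sub_nonisolated s : is_ONS e s -> {subset s <= nonisolated}.
Proof.
move=> ons v /(nthP v) [i lti <-].
have [f [_ /(_ i lti) [esf _]]] := (ONS_footprintP v s).1 ons.
by rewrite inE; apply/existsP; exists (nth v f i).
Qed.

Lemma ONS_size_le_gamma s : is_ONS e s -> size s <= gamma_gr_t e.
Proof.
move=> ons; have lesT : size s < #|T|.+1.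
  by rewrite ltnS -(card_uniqP (ONS_uniq ons)) max_card.
apply: (@leq_bigmax_cond _ _ _ (Ordinal lesT)).
by apply/existsP; exists (in_tuple s).
Qed.

Lemma max_ONS_exists : exists s, max_ONS s.
Proof.
pose P := [pred k : 'I_#|T|.+1 | [exists t : k.-tuple T, is_ONS e t]].
have P0 : ord0 \in P by apply/existsP; exists [tuple]; apply/forallP => -[].
have P_gt0 : 0 < #|P| by apply/card_gt0P; exists ord0.
have [k /existsP[t ons] gammaE] := eq_bigmax_cond val P_gt0.
by exists t; split; rewrite // size_tuple /gamma_gr_t gammaE.
Qed.

Lemma max_ONS_dominates s x z : max_ONS s -> e x z -> has (e^~ z) s.
Proof.
case=> ons szs exz; apply/negPn/negP => fresh.
have [f fpf] := (ONS_footprintP x s).1 ons.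
have ons' : is_ONS e (rcons s x).
  by apply/(ONS_footprintP x); exists (rcons f z); apply: footprint_rcons.
by have := ONS_size_le_gamma ons'; rewrite size_rcons szs ltnn.
Qed.

Lemma dominated_mem_max_ONS s z : symmetric e ->
  max_ONS s -> has (e^~ z) s -> exists2 t, max_ONS t & z \in t.
Proof.
move=> e_sym [ons szs] dom; have [f fpf] := (ONS_footprintP z s).1 ons.
pose m := find (e^~ z) s.
have ltm : m < size s by rewrite -has_find.
have fpz := footprint_set_nth fpf ltm (nth_find z dom)
  (fun j ltj => negbT (before_find z ltj)).
have szf : size (set_nth z f m z) = size s by case: fpz.
exists (rev (set_nth z f m z)).
  split; last by rewrite size_rev szf.
  by apply/(ONS_footprintP z); exists (rev s); apply: footprint_rev.
rewrite mem_rev; apply/(nthP z); exists m; first by rewrite szf.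
by rewrite nth_set_nth /= eqxx.
Qed.

Lemma max_ONS_set s : max_ONS s -> gamma_gr_t e = #|nonisolated| ->
  [set x in s] = nonisolated.
Proof.
case=> ons szs gammaE; apply/eqP; rewrite eqEcard; apply/andP; split.
  by apply/subsetP => x; rewrite inE; apply: ONS_sub_nonisolated.
by rewrite -gammaE -szs cardsE (card_uniqP (ONS_uniq ons)).
Qed.

End GrundyTotalDomination.

Theorem corollary5p3 (T : finType) (e : rel T)
    (e_sym : symmetric e) (e_irr : irreflexive e) :
  (exists! S : {set T}, is_GTDS e S) <->
  gamma_gr_t e = #|T| - n_isolated e.
Proof.
rewrite -card_nonisolated; split.
- case=> _ [[s [ons szs ->]] uniqS].
  have dom_mem z : has (e^~ z) s -> z \in s.
    move=> /(dominated_mem_max_ONS e_sym (conj ons szs)) [t [onst szt] zt].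
    have /setP/(_ z) : [set x in s] = [set x in t] by apply: uniqS; exists t.
    by rewrite !inE => ->.
  have sE : [set x in s] = nonisolated e.
    apply/setP => x; rewrite !inE; apply/idP/existsP => [xs | [y exy]].
      by have := ONS_sub_nonisolated ons xs; rewrite inE => /existsP.
    have ys := dom_mem y (max_ONS_dominates (conj ons szs) exy).
    by apply: dom_mem; apply/hasP; exists y; rewrite // e_sym.
  by rewrite -sE cardsE (card_uniqP (ONS_uniq ons)).
- move=> gammaE; have [s maxs] := max_ONS_exists e.
  exists [set x in s]; split; first by exists s; case: maxs.
  move=> _ [t [onst szt ->]].
  by rewrite (max_ONS_set maxs gammaE) (max_ONS_set (conj onst szt) gammaE).
Qed.
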